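(* Let data $\mathbf X\in\mathcal X$ have distribution $P_\theta$, $\theta\in\Theta$, with $m$ tasks, decision spaces $\mathcal D_i$ and losses $\ell_i:\mathcal D_i\times\Theta\to[0,1]$. Let $\mathbf s^1:\mathcal X\to\{0,1\}^m$ be any selection rule and $d_i:\mathcal X\times[0,1]\to\mathcal D_i$ decision rules such that (i) $d_i$ controls the $\ell_i$-risk: $\mathbb E_\theta[\ell_i(d_i(\mathbf X;q'),\theta)]\le q'$ for all $q'\in[0,1]$ and $\theta\in\Theta$; (ii) $\ell_i(d_i(\mathbf x;q'),\theta)$ is non-decreasing in $q'$. Let $f(m)=m\sum_{j=1}^m(1/j)$, $\mathbf S^1=\mathbf s^1(\mathbf X)$ with selected set $\mathcal S^1=\{i:S^1_i=1\}$, and $D_i^1=d_i(\mathbf X;q|\mathcal S^1|/f(m))$. Then for all $\theta\in\Theta$ and $q\in[0,1]$, $$\mathbb E_\theta\left[\frac{\sum_{i\in\mathcal S^1}\ell_i(D_i^1,\theta)}{1\vee|\mathcal S^1|}\right]\le q.$$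
   Context: No independence between tasks is assumed; $\mathbb E_\theta$ denotes expectation under $P_\theta$. *)

From HB Require Import structures.
From mathcomp Require Import all_boot all_order all_algebra.
From mathcomp Require Import all_classical all_reals all_analysis.
Set Implicit Arguments. Unset Strict Implicit. Unset Printing Implicit Defensive.
Import Order.TTheory GRing.Theory Num.Theory.
Local Open Scope ring_scope.

Definition fBY {R : realType} (m : nat) : R :=
  m%:R * \sum_(j < m) (j.+1%:R)^-1.

Definition selset (m : nat) (s : 'I_m -> bool) : {set 'I_m} :=
  [set i | s i].

From HB Require Import structures.
From mathcomp Require Import all_boot all_order all_algebra.
From mathcomp Require Import all_classical all_reals all_analysis.
From mathcomp Require Import ring lra measurable_realfun.
Import Order.TTheory GRing.Theory Num.Theory.
Local Open Scope classical_set_scope.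
Local Open Scope ring_scope.

(* Fix a task i and put a_k := loss_i (d_i (X; q k / f(m)), theta), which is
   nondecreasing in k.  For every 1 <= K <= m, Abel summation bounds a_K / K by
   the majorant sum_(1 <= k < m) a_k / (k (k+1)) + a_m / m, which no longer
   depends on K; by risk control its expectation is at most
   q / f(m) * (sum_(1 <= k < m) 1/(k+1) + 1) = q H_m / f(m).  Taking K = |S^1|,
   the ratio in the theorem is dominated pointwise by the sum of these m
   majorants, whose expectation is at most m q H_m / f(m) = q.  The integral of
   a nonnegative function is monotone without any measurability assumption, so
   the selection rule is never required to be measurable. *)

Section majorant.
Context {R : realType}.
Implicit Types (a : nat -> R) (m : nat).

Definition harmonic m : R := \sum_(j < m) (j.+1%:R)^-1.

Lemma fBYE m : fBY m = m%:R * harmonic m :> R.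
Proof. by []. Qed.

Lemma harmonic_ge0 m : 0 <= harmonic m.
Proof. by apply: sumr_ge0 => j _; rewrite invr_ge0. Qed.

Lemma harmonic_ge1 m : (0 < m)%N -> 1 <= harmonic m.
Proof.
case: m => // m _; rewrite /harmonic big_ord_recl /= invr1 lerDl.
by apply: sumr_ge0 => j _; rewrite invr_ge0.
Qed.

Lemma fBY_ge0 m : 0 <= fBY m :> R.
Proof. by rewrite fBYE mulr_ge0 ?harmonic_ge0. Qed.

Lemma natr_divr_fBY_itv k m : (k <= m)%N -> 0 <= k%:R / (fBY m : R) <= 1.
Proof.
move=> km; rewrite divr_ge0 ?fBY_ge0 //=.
case: m km => [|m] km; first by rewrite /fBY mul0r invr0 mulr0.
have h1 := harmonic_ge1 m.+1 isT.
have m0 : 0 < m.+1%:R :> R by rewrite ltr0n.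
rewrite ler_pdivrMr fBYE; last by apply: mulr_gt0 => //; lra.
rewrite mul1r; apply: (le_trans (y := m.+1%:R)); first by rewrite ler_nat.
by rewrite ler_peMr // ltW.
Qed.

Lemma natr_mul_harmonic_divr_fBY_le (q : R) m :
  0 <= q -> m%:R * (q / fBY m * harmonic m) <= q.
Proof.
move=> q0; case: m => [|m]; first by rewrite mul0r.
rewrite mulrCA mulrA -mulrA -fBYE -mulrA mulVf ?mulr1 //.
rewrite fBYE mulf_neq0 ?pnatr_eq0 //; apply: lt0r_neq0.
exact: lt_le_trans ltr01 (harmonic_ge1 m.+1 isT).
Qed.

Definition majorant a m : R :=
  \sum_(1 <= k < m) a k / (k * k.+1)%:R + a m / m%:R.

Lemma majorant_ge0 a m : (forall k, 0 <= a k) -> 0 <= majorant a m.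
Proof.
move=> a0; apply: addr_ge0; last exact: divr_ge0.
by apply: sumr_ge0 => k _; exact: divr_ge0.
Qed.

Lemma majorantZ (c : R) a m : majorant (fun k => c * a k) m = c * majorant a m.
Proof.
rewrite /majorant mulrDr mulr_sumr; congr (_ + _); last by rewrite mulrA.
by apply: eq_bigr => k _; rewrite mulrA.
Qed.

Lemma majorant_natr m : majorant (fun k => k%:R) m = harmonic m.
Proof.
case: m => [|m].
  by rewrite /majorant big_geq // invr0 mulr0 addr0 /harmonic big_ord0.
rewrite /majorant divff ?pnatr_eq0 // /harmonic big_ord_recl /= invr1 addrC.
rewrite big_add1 big_mkord /=; congr (_ + _); apply: eq_bigr => k _.
by rewrite natrM invfM mulrA divff ?pnatr_eq0 // mul1r.
Qed.

(* Abel summation: 1/K = sum_(K <= k < m) 1/(k(k+1)) + 1/m, and a_K <= a_k for k >= K. *)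
Lemma ler_majorant a m K : (forall k, 0 <= a k) ->
  (forall k, (k < m)%N -> a k <= a k.+1) -> (0 < K <= m)%N ->
  a K / K%:R <= majorant a m.
Proof.
move=> a0; elim: m => [|m IH] amono /andP[K0 Km]; first by case: K K0 Km.
have [->|KmE] := eqVneq K m.+1.
  rewrite /majorant lerDr; apply: sumr_ge0 => k _; exact: divr_ge0.
have {}Km : (K <= m)%N by rewrite -ltnS ltn_neqAle KmE.
have m0 : (0 < m)%N by apply: leq_trans Km.
apply: (le_trans (IH (fun k km => amono k (ltnW km)) _)); first by rewrite K0.
rewrite /majorant big_nat_recr //= -addrA lerD2l.
have -> : a m / m%:R = a m / (m * m.+1)%:R + a m / m.+1%:R.
  by rewrite natrM; field; rewrite nat1r !pnatr_eq0 -!lt0n m0.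
by rewrite lerD2l ler_pM2r ?amono // invr_gt0 ltr0n.
Qed.

End majorant.

Section integral_majorant.
Context {R : realType} {d : measure_display} {X : measurableType d}.
Variable mu : {measure set X -> \bar R}.

Lemma ge0_le_integral_nonmeasurable (f g : X -> \bar R) :
  (forall x, (0 <= f x)%E) -> (forall x, (f x <= g x)%E) ->
  (\int[mu]_x f x <= \int[mu]_x g x)%E.
Proof.
move=> f0 fg; have g0 x : (0 <= g x)%E := le_trans (f0 x) (fg x).
rewrite !ge0_integralTE //; apply: ereal_sup_le => _ [h hf <-].
by exists h => // x; exact: le_trans (hf x) (fg x).
Qed.

Lemma integralZr_le (g : X -> R) (w b : R) :
  measurable_fun setT g -> (forall x, 0 <= g x) -> 0 <= w ->
  (\int[mu]_x (g x)%:E <= b%:E)%E -> (\int[mu]_x (g x * w)%:E <= (b * w)%:E)%E.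
Proof.
move=> mg g0 w0 gb.
under eq_integral do rewrite mulrC EFinM.
rewrite ge0_integralZl_EFin //.
- by rewrite mulrC EFinM lee_wpmul2l // lee_fin.
- by move=> x _; rewrite lee_fin.
- exact/measurable_EFinP.
Qed.

Lemma measurable_majorant (a : nat -> X -> R) m :
  (forall k, measurable_fun setT (a k)) ->
  measurable_fun setT (fun x => majorant (a^~ x) m).
Proof.
move=> ma; apply: measurable_funD; last exact: measurable_funM.
by apply: measurable_sum => k; exact: measurable_funM.
Qed.

Lemma integral_majorant_le (a : nat -> X -> R) (b : nat -> R) m :
  (forall k, measurable_fun setT (a k)) -> (forall k x, 0 <= a k x) ->
  (forall k, (0 < k <= m)%N -> (\int[mu]_x (a k x)%:E <= (b k)%:E)%E) ->
  (\int[mu]_x (majorant (a^~ x) m)%:E <= (majorant b m)%:E)%E.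
Proof.
move=> ma a0 ab.
have measurable_term w k : measurable_fun setT (fun x => a k x * w).
  exact: measurable_funM.
have term_ge0 (w : R) k x : 0 <= w -> (0 <= (a k x * w)%:E)%E.
  by move=> w0; rewrite lee_fin mulr_ge0.
rewrite /majorant; under eq_integral do rewrite EFinD -sumEFin.
rewrite ge0_integralD //; first last.
- exact/measurable_EFinP.
- by move=> x _; exact: term_ge0.
- by apply: emeasurable_sum => k; exact/measurable_EFinP.
- by move=> x _; apply: sume_ge0 => k _; exact: term_ge0.
rewrite ge0_integral_sum //; first last.
- by move=> k x _; exact: term_ge0.
- by move=> k; exact/measurable_EFinP.
rewrite EFinD -sumEFin; apply: leeD.
  rewrite big_nat_cond [leRHS]big_nat_cond.
  apply: lee_sum => k; rewrite andbT => /andP[k0 km].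
  by apply: integralZr_le => //; apply: ab; rewrite k0 ltnW.
case: m ab => [|m] ab.
  by rewrite invr0 mulr0 integral0_eq // => x _; rewrite mulr0.
by apply: integralZr_le => //; apply: ab; rewrite leqnn.
Qed.

End integral_majorant.

Lemma selected_average_le_majorant {R : realType} m (S : {set 'I_m})
    (a : 'I_m -> nat -> R) :
  (forall i k, 0 <= a i k) -> (forall i k, (k < m)%N -> a i k <= a i k.+1) ->
  (\sum_(i in S) a i #|S|) / Num.max 1 #|S|%:R <= \sum_i majorant (a i) m.
Proof.
move=> a0 amono.
have majorant_sum_ge0 : 0 <= \sum_i majorant (a i) m.
  by apply: sumr_ge0 => i _; exact: majorant_ge0.
have [/eqP|S0] := posnP #|S|.
  by rewrite cards_eq0 => /eqP->; rewrite big_set0 mul0r.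
rewrite (max_idPr _) ?ler1n // mulr_suml.
apply: (le_trans (y := \sum_(i in S) majorant (a i) m)).
  apply: ler_sum => i _; apply: ler_majorant; [by [] | exact: amono |].
  by rewrite S0 -[leqRHS]card_ord max_card.
rewrite [leRHS](bigID (mem S)) /= lerDl.
by apply: sumr_ge0 => i _; exact: majorant_ge0.
Qed.

Theorem theorem3 (R : realType) (d : measure_display) (X : measurableType d)
  (Theta : Type) (P : Theta -> probability X R) (m : nat)
  (Dsp : 'I_m -> Type) (loss : forall i : 'I_m, Dsp i -> Theta -> R)
  (s1 : X -> 'I_m -> bool) (dec : forall i : 'I_m, X -> R -> Dsp i)
  (loss01 : forall i (a : Dsp i) th, 0 <= loss i a th <= 1)
  (s1_meas : forall i, measurable [set x | s1 x i])
  (loss_meas : forall i th q', 0 <= q' <= 1 ->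
      measurable_fun setT (fun x => loss i (dec i x q') th))
  (risk_ctrl : forall i q' th, 0 <= q' <= 1 ->
      (\int[P th]_x (loss i (dec i x q') th)%:E <= q'%:E)%E)
  (mono : forall i x th q1 q2, 0 <= q1 -> q1 <= q2 -> q2 <= 1 ->
      loss i (dec i x q1) th <= loss i (dec i x q2) th) :
  forall (th : Theta) (q : R), 0 <= q <= 1 ->
  (\int[P th]_x
     ((\sum_(i in selset (s1 x))
         loss i (dec i x (q * #|selset (s1 x)|%:R / fBY m)) th)
      / Num.max 1 (#|selset (s1 x)|%:R))%:E <= q%:E)%E.
Proof.
move=> th q /andP[q0 q1].
have loss_ge0 i (a : Dsp i) : 0 <= loss i a th by have /andP[] := loss01 i a th.
(* Clamping k at m keeps every level in [0, 1], so that the hypotheses on the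
   decision rules apply to a i k for all k. *)
pose level k := q * (minn k m)%:R / fBY m.
have level01 k : 0 <= level k <= 1.
  have /andP[r0 r1] := natr_divr_fBY_itv (R := R) _ _ (geq_minr k m).
  by rewrite /level -mulrA mulr_ge0 //= mulr_ile1.
pose a i k x := loss i (dec i x (level k)) th.
have ma i k : measurable_fun setT (a i k) by exact: loss_meas.
have a_mono i k x : (k < m)%N -> a i k x <= a i k.+1 x.
  move=> km; have /andP[l0 _] := level01 k; have /andP[_ l1] := level01 k.+1.
  apply: mono => //; rewrite ler_wpM2r ?invr_ge0 ?fBY_ge0 // ler_wpM2l // ler_nat.
  by rewrite leq_min geq_minr andbT (leq_trans (geq_minl _ _)).
have a_risk i k : (0 < k <= m)%N ->
    (\int[P th]_x (a i k x)%:E <= (q / fBY m * k%:R)%:E)%E.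
  by case/andP => _ km; rewrite mulrAC -[in k%:R](minn_idPl km); exact: risk_ctrl.
apply: (le_trans (ge0_le_integral_nonmeasurable _ _
  (fun x => (\sum_i majorant (a i ^~ x) m)%:E) _ _)).
- move=> x; rewrite lee_fin divr_ge0 ?le_max ?ler01 //.
  by apply: sumr_ge0 => i _; exact: loss_ge0.
- move=> x; rewrite lee_fin; set S := selset (s1 x).
  have Sm : (#|S| <= m)%N by rewrite -[leqRHS]card_ord max_card.
  rewrite (eq_bigr (fun i => a i #|S| x)) => [|i _]; last first.
    by rewrite /a /level (minn_idPl Sm).
  apply: selected_average_le_majorant => [i k|i k]; [exact: loss_ge0|exact: a_mono].
under eq_integral do rewrite -sumEFin.
rewrite ge0_integral_sum //; first last.
- by move=> i x _; rewrite lee_fin majorant_ge0 // => k; exact: loss_ge0.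
- by move=> i; apply/measurable_EFinP; exact: measurable_majorant.
apply: (le_trans (y := \sum_(i < m) (q / fBY m * harmonic m)%:E)).
  apply: lee_sum => i _; rewrite -majorant_natr -majorantZ.
  apply: integral_majorant_le => [k|k x|k].
  - exact: ma.
  - exact: loss_ge0.
  - exact: a_risk.
rewrite sumEFin sumr_const card_ord lee_fin -mulr_natl.
exact: natr_mul_harmonic_divr_fBY_le.
Qed.
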